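(* There exists $c\in(0,1)$ such that for all $m,n,k\in\mathbb N$, $$\P\big(\tau^{(m)}_k\le n\big)\le\Big(\frac{n(\log m+1)}{c\,k\,m}\wedge1\Big)^{\frac{ck}{\log m+1}}.$$ Equivalently, for all $m\in\mathbb N$ and $s,t\in(0,\infty)$, $\P\big(\tau^{(m)}_{\lfloor s(\log m+1)\rfloor}\le tm\big)\le e^{-cs\log^+(\frac{cs}{t})}$.
   Context: Positive reals $r(n)=\frac an(1+o(1))$, $a\in(0,\infty)$, $R_m=\sum_{n\le m}r(n)$; $(T^{(m)}_i)$ i.i.d. with $\P(T^{(m)}_i=n)=\frac{r(n)}{R_m}\mathbf1_{\{1,\dots,m\}}(n)$; $\tau^{(m)}_k=\sum_{i\le k}T^{(m)}_i$. $\log^+x=\max(\log x,0)$. *)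

From Stdlib Require Import Reals Lra Lia Arith.
Open Scope R_scope.

Fixpoint sum_1_to (f : nat -> R) (m : nat) : R :=
  match m with
  | O => 0
  | S p => sum_1_to f p + f (S p)
  end.

Definition Rm (r : nat -> R) (m : nat) : R := sum_1_to r m.

(* law of T^(m): P(T = i) = r(i)/R_m for i in {1,..,m} *)
Definition pmf (r : nat -> R) (m i : nat) : R := r i / Rm r m.

(* tau_cdf r m k n = P(tau^(m)_k <= n), where tau^(m)_k = T_1+...+T_k
   with T_i i.i.d. of law pmf r m.  Computed by conditioning on T_1:
   P(tau_0 <= n) = 1 ;  P(tau_{k+1} <= n) = sum_{i=1}^m P(T=i) P(tau_k <= n-i)
   (terms with i > n vanish since tau_k >= 0). *)
Fixpoint tau_cdf (r : nat -> R) (m k n : nat) : R :=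
  match k with
  | O => 1
  | S k' => sum_1_to (fun i => if (i <=? n)%nat
                               then pmf r m i * tau_cdf r m k' (n - i)
                               else 0) m
  end.

From Stdlib Require Import Reals Lra Lia.
Open Scope R_scope.

(* Chernoff: P(tau_k <= n) <= e^(l n) E[e^(-l T)]^k <= exp (l n - k E[1 - e^(-l T)]).
   Since i r(i) is bounded above and below, P(T = i) >= const / (i (ln m + 1)), and for
   l = 1/x this gives E[1 - e^(-l T)] >= const / (ln m + 1) * sum_(i <= m) 1/(x + i),
   which is at least const (1 + ln (m/x)) / (ln m + 1).  With x = n (ln m + 1)/(c k)
   we get l n = c k/(ln m + 1), and the exponent collapses to c k/(ln m + 1) * ln (x/m). *)

Lemma sum_1_to_ext (f g : nat -> R) (m : nat) :
  (forall i, (1 <= i <= m)%nat -> f i = g i) -> sum_1_to f m = sum_1_to g m.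
Proof.
  induction m as [|m IH]; intros Hfg; simpl; [reflexivity|].
  rewrite IH by (intros; apply Hfg; lia). now rewrite (Hfg (S m)) by lia.
Qed.

Lemma sum_1_to_le (f g : nat -> R) (m : nat) :
  (forall i, (1 <= i <= m)%nat -> f i <= g i) -> sum_1_to f m <= sum_1_to g m.
Proof.
  induction m as [|m IH]; intros Hfg; simpl; [lra|].
  apply Rplus_le_compat; [apply IH; intros; apply Hfg | apply Hfg]; lia.
Qed.

Lemma sum_1_to_scal (c : R) (f : nat -> R) (m : nat) :
  sum_1_to (fun i => c * f i) m = c * sum_1_to f m.
Proof. induction m as [|m IH]; simpl; [|rewrite IH]; ring. Qed.

Lemma sum_1_to_minus (f g : nat -> R) (m : nat) :
  sum_1_to (fun i => f i - g i) m = sum_1_to f m - sum_1_to g m.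
Proof. induction m as [|m IH]; simpl; [|rewrite IH]; ring. Qed.

Lemma sum_1_to_const (c : R) (m : nat) : sum_1_to (fun _ => c) m = INR m * c.
Proof. induction m as [|m IH]; cbn [sum_1_to]; [simpl|rewrite IH, S_INR]; ring. Qed.

Lemma sum_1_to_nonneg (f : nat -> R) (m : nat) :
  (forall i, (1 <= i <= m)%nat -> 0 <= f i) -> 0 <= sum_1_to f m.
Proof.
  intros Hf. rewrite <- (Rmult_0_r (INR m)), <- sum_1_to_const.
  now apply sum_1_to_le.
Qed.

Lemma ln_le_ln (x y : R) : 0 < x -> x <= y -> ln x <= ln y.
Proof. intros Hx [Hxy | <-]; [left; now apply ln_increasing | lra]. Qed.

Lemma exp_le_exp (x y : R) : x <= y -> exp x <= exp y.
Proof. intros [Hxy | <-]; [left; now apply exp_increasing | lra]. Qed.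

Lemma exp_pow (x : R) (k : nat) : exp x ^ k = exp (INR k * x).
Proof.
  induction k as [|k IH]; simpl pow; [simpl; now rewrite Rmult_0_l, exp_0|].
  rewrite IH, S_INR, <- exp_plus. f_equal; ring.
Qed.

Lemma ln_sub_le (a b : R) : 0 < a -> 0 < b -> ln b - ln a <= b / a - 1.
Proof.
  intros Ha Hb. pose proof (exp_ineq1_le (ln b - ln a)) as Hexp.
  unfold Rminus in Hexp. rewrite exp_plus, exp_Ropp, !exp_ln in Hexp by assumption.
  unfold Rdiv. lra.
Qed.

Lemma ln_succ_sub_bounds (a : R) : 0 < a -> / (a + 1) <= ln (a + 1) - ln a <= / a.
Proof.
  intros Ha. pose proof (ln_sub_le a (a + 1) Ha ltac:(lra)).
  pose proof (ln_sub_le (a + 1) a ltac:(lra) Ha).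
  assert ((a + 1) / a - 1 = / a) by (field; lra).
  assert (a / (a + 1) - 1 = - / (a + 1)) by (field; lra).
  lra.
Qed.

Lemma one_sub_exp_ge (y : R) : 0 <= y -> y / (1 + y) <= 1 - exp (- y).
Proof.
  intros Hy. rewrite exp_Ropp.
  assert (/ exp y <= / (1 + y)) by (apply Rinv_le_contravar; [lra | apply exp_ineq1_le]).
  assert (y / (1 + y) = 1 - / (1 + y)) by (field; lra).
  lra.
Qed.

Lemma ln_INR_nonneg (m : nat) : (1 <= m)%nat -> 0 <= ln (INR m).
Proof. intros Hm. rewrite <- ln_1. apply ln_le_ln; [lra | now apply (le_INR 1)]. Qed.

Lemma sum_inv_le_ln (m : nat) :
  (1 <= m)%nat -> sum_1_to (fun i => / INR i) m <= ln (INR m) + 1.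
Proof.
  induction m as [|m IH]; intros Hm; [lia|].
  destruct (Nat.eq_dec m 0) as [-> | Hm0].
  - simpl. rewrite Rplus_0_l, Rinv_1, ln_1. lra.
  - assert (0 < INR m) by (apply lt_0_INR; lia).
    cbn [sum_1_to]. rewrite S_INR.
    pose proof (IH ltac:(lia)). pose proof (ln_succ_sub_bounds (INR m) ltac:(lra)).
    lra.
Qed.

Lemma sum_inv_shift_ge_ln (x : R) (m : nat) :
  0 < x -> ln (x + INR m + 1) - ln (x + 1) <= sum_1_to (fun i => / (x + INR i)) m.
Proof.
  intros Hx. induction m as [|m IH]; cbn [sum_1_to]; [simpl INR; rewrite Rplus_0_r; lra|].
  rewrite S_INR. pose proof (pos_INR m).
  pose proof (ln_succ_sub_bounds (x + INR m + 1) ltac:(lra)).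
  replace (x + (INR m + 1)) with (x + INR m + 1) by ring.
  lra.
Qed.

(* The constant 9 is generous: the sum is at least [1/3] and at least [ln m - ln x - 1]. *)
Lemma sum_inv_shift_ge (x : R) (m : nat) :
  1 <= x <= INR m ->
  (1 + ln (INR m) - ln x) / 9 <= sum_1_to (fun i => / (x + INR i)) m.
Proof.
  intros Hx. eapply Rle_trans; [|apply sum_inv_shift_ge_ln; lra].
  assert (third : 1 / 3 <= ln (x + INR m + 1) - ln (x + 1)).
  { pose proof (ln_sub_le (x + INR m + 1) (x + 1) ltac:(lra) ltac:(lra)).
    assert ((x + 1) / (x + INR m + 1) <= 2 / 3).
    { apply (Rmult_le_reg_r (x + INR m + 1)); [lra|].
      unfold Rdiv. rewrite Rmult_assoc, Rinv_l by lra. lra. }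
    lra. }
  assert (log_ratio : ln (INR m) - ln x - 1 <= ln (x + INR m + 1) - ln (x + 1)).
  { pose proof (ln_le_ln (INR m) (x + INR m + 1) ltac:(lra) ltac:(lra)).
    pose proof (ln_succ_sub_bounds x ltac:(lra)).
    assert (/ x <= 1) by (rewrite <- Rinv_1; apply Rinv_le_contravar; lra).
    lra. }
  destruct (Rle_dec (ln (INR m) - ln x) 2); lra.
Qed.

Section Law.
Variables (r : nat -> R) (m : nat).
Hypothesis r_pos : forall n : nat, (1 <= n)%nat -> 0 < r n.
Hypothesis m_pos : (1 <= m)%nat.

Lemma Rm_pos : 0 < Rm r m.
Proof.
  unfold Rm. destruct m as [|p]; [lia|]. cbn [sum_1_to].
  apply Rplus_le_lt_0_compat; [|apply r_pos; lia].
  apply sum_1_to_nonneg. intros; left; apply r_pos; lia.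
Qed.

Lemma pmf_nonneg (i : nat) : (1 <= i)%nat -> 0 <= pmf r m i.
Proof. intros. apply Rle_mult_inv_pos; [left; auto | apply Rm_pos]. Qed.

Lemma pmf_sum : sum_1_to (pmf r m) m = 1.
Proof.
  unfold pmf. rewrite (sum_1_to_ext _ (fun i => / Rm r m * r i)).
  - rewrite sum_1_to_scal. fold (Rm r m). field. apply Rgt_not_eq, Rm_pos.
  - intros; unfold Rdiv; ring.
Qed.

Lemma tau_cdf_le1 (k n : nat) : tau_cdf r m k n <= 1.
Proof.
  revert n; induction k as [|k IH]; intros n; cbn [tau_cdf]; [lra|].
  rewrite <- pmf_sum. apply sum_1_to_le; intros i Hi.
  assert (0 <= pmf r m i) by (apply pmf_nonneg; lia).
  destruct (i <=? n)%nat; [|lra].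
  rewrite <- (Rmult_1_r (pmf r m i)) at 2. now apply Rmult_le_compat_l.
Qed.

Lemma tau_cdf_lt (k n : nat) : (n < k)%nat -> tau_cdf r m k n = 0.
Proof.
  revert n; induction k as [|k IH]; intros n Hnk; [lia|]. cbn [tau_cdf].
  rewrite (sum_1_to_ext _ (fun _ => 0)), sum_1_to_const; [ring|].
  intros i Hi. destruct (Nat.leb_spec i n); [|reflexivity].
  rewrite IH by lia. ring.
Qed.

Definition laplace (l : R) : R := sum_1_to (fun i => pmf r m i * exp (- l * INR i)) m.

Lemma laplace_nonneg (l : R) : 0 <= laplace l.
Proof.
  apply sum_1_to_nonneg; intros.
  apply Rmult_le_pos; [apply pmf_nonneg; lia | left; apply exp_pos].
Qed.

Lemma tau_cdf_chernoff (l : R) (k n : nat) :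
  0 <= l -> tau_cdf r m k n <= exp (l * INR n) * laplace l ^ k.
Proof.
  intros Hl. revert n; induction k as [|k IH]; intros n.
  - cbn. rewrite Rmult_1_r, <- exp_0. apply exp_le_exp.
    apply Rmult_le_pos; [exact Hl | apply pos_INR].
  - cbn [tau_cdf pow].
    replace (exp (l * INR n) * (laplace l * laplace l ^ k))
      with (sum_1_to (fun i => exp (l * INR n) * laplace l ^ k *
                               (pmf r m i * exp (- l * INR i))) m)
      by (rewrite sum_1_to_scal; unfold laplace; ring).
    apply sum_1_to_le; intros i Hi.
    assert (Hpmf : 0 <= pmf r m i) by (apply pmf_nonneg; lia).
    destruct (Nat.leb_spec i n).
    + assert (E : exp (l * INR (n - i)) = exp (l * INR n) * exp (- l * INR i))
        by (rewrite <- exp_plus, minus_INR by assumption; f_equal; ring).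
      specialize (IH (n - i)%nat). rewrite E in IH.
      assert (0 <= exp (- l * INR i)) by (left; apply exp_pos).
      nra.
    + apply Rmult_le_pos.
      * apply Rmult_le_pos; [left; apply exp_pos | apply pow_le, laplace_nonneg].
      * apply Rmult_le_pos; [exact Hpmf | left; apply exp_pos].
Qed.

Lemma one_sub_laplace (l : R) :
  1 - laplace l = sum_1_to (fun i => pmf r m i * (1 - exp (- l * INR i))) m.
Proof.
  unfold laplace. rewrite <- pmf_sum at 1. rewrite <- sum_1_to_minus.
  apply sum_1_to_ext; intros; ring.
Qed.

Lemma tau_cdf_le_exp (l : R) (k n : nat) :
  0 <= l -> tau_cdf r m k n <= exp (l * INR n - INR k * (1 - laplace l)).
Proof.
  intros Hl. eapply Rle_trans; [exact (tau_cdf_chernoff l k n Hl)|].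
  assert (laplace l <= exp (- (1 - laplace l)))
    by (pose proof (exp_ineq1_le (- (1 - laplace l))); lra).
  eapply Rle_trans.
  { apply Rmult_le_compat_l; [left; apply exp_pos|].
    apply pow_incr. split; [apply laplace_nonneg | eassumption]. }
  rewrite exp_pow, <- exp_plus. apply exp_le_exp. lra.
Qed.

End Law.

Lemma pos_bounds_upto (u : nat -> R) (N : nat) :
  (forall n : nat, (1 <= n)%nat -> 0 < u n) ->
  exists A B, 0 < B /\ forall n, (1 <= n <= N)%nat -> B <= u n <= A.
Proof.
  intros u_pos. induction N as [|N [A [B [HB HAB]]]].
  - exists 1, 1. split; [lra | intros; lia].
  - pose proof (u_pos (S N) ltac:(lia)).
    exists (Rmax A (u (S N))), (Rmin B (u (S N))).
    split; [now apply Rmin_glb_lt|].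
    intros n Hn. destruct (Nat.eq_dec n (S N)) as [-> | HnN].
    + split; [apply Rmin_r | apply Rmax_r].
    + destruct (HAB n ltac:(lia)).
      split; [eapply Rle_trans; [apply Rmin_l | assumption]
             | eapply Rle_trans; [eassumption | apply Rmax_l]].
Qed.

Lemma pos_cv_bounds (u : nat -> R) (a : R) :
  0 < a -> (forall n : nat, (1 <= n)%nat -> 0 < u n) -> Un_cv u a ->
  exists A B, 0 < B /\ forall n, (1 <= n)%nat -> B <= u n <= A.
Proof.
  intros Ha u_pos u_cv. destruct (u_cv (a / 2) ltac:(lra)) as [N HN].
  destruct (pos_bounds_upto u N u_pos) as [A [B [HB HAB]]].
  exists (Rmax A (3 * a / 2)), (Rmin B (a / 2)).
  split; [apply Rmin_glb_lt; lra|].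
  intros n Hn. destruct (Nat.le_gt_cases n N).
  - destruct (HAB n ltac:(lia)).
    split; [eapply Rle_trans; [apply Rmin_l | assumption]
           | eapply Rle_trans; [eassumption | apply Rmax_l]].
  - specialize (HN n ltac:(lia)). unfold R_dist in HN. apply Rabs_def2 in HN.
    split; [eapply Rle_trans; [apply Rmin_r | lra]
           | eapply Rle_trans; [| apply Rmax_r]; lra].
Qed.

Section Bounds.
Variables (r : nat -> R) (A B : R).
Hypothesis B_pos : 0 < B.
Hypothesis r_bounds : forall n : nat, (1 <= n)%nat -> B <= INR n * r n <= A.

Lemma r_pos (n : nat) : (1 <= n)%nat -> 0 < r n.
Proof.
  intros Hn. assert (0 < INR n) by (apply lt_0_INR; lia).
  destruct (r_bounds n Hn). nra.
Qed.

Lemma A_pos : 0 < A.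
Proof. destruct (r_bounds 1 (le_n 1)). lra. Qed.

Lemma Rm_le (m : nat) : (1 <= m)%nat -> Rm r m <= A * (ln (INR m) + 1).
Proof.
  intros Hm. unfold Rm.
  eapply Rle_trans;
    [| apply Rmult_le_compat_l; [left; exact A_pos | now apply sum_inv_le_ln]].
  rewrite <- sum_1_to_scal. apply sum_1_to_le; intros i Hi.
  assert (0 < INR i) by (apply lt_0_INR; lia).
  destruct (r_bounds i ltac:(lia)).
  apply (Rmult_le_reg_l (INR i)); [assumption|]. field_simplify; lra.
Qed.

Lemma one_sub_laplace_ge (m : nat) (x : R) : (1 <= m)%nat -> 0 < x ->
  B / (A * (ln (INR m) + 1)) * sum_1_to (fun i => / (x + INR i)) m
    <= 1 - laplace r m (/ x).
Proof.
  intros Hm Hx. set (L := ln (INR m) + 1).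
  assert (HRm := Rm_le m Hm). fold L in HRm.
  assert (HRm0 := Rm_pos r m r_pos Hm).
  pose proof A_pos.
  assert (HL : 0 < L) by (pose proof (ln_INR_nonneg m Hm); unfold L; lra).
  rewrite (one_sub_laplace r m r_pos Hm), <- sum_1_to_scal.
  apply sum_1_to_le; intros i Hi.
  assert (Hi0 : 0 < INR i) by (apply lt_0_INR; lia).
  destruct (r_bounds i ltac:(lia)) as [Hlow _].
  assert (Hpmf : B / INR i / (A * L) <= pmf r m i).
  { unfold pmf. apply Rle_trans with (r i / (A * L)).
    - unfold Rdiv at 1 3. apply Rmult_le_compat_r; [left; apply Rinv_0_lt_compat; lra|].
      apply (Rmult_le_reg_l (INR i)); [assumption|]. field_simplify; lra.
    - unfold Rdiv. apply Rmult_le_compat_l; [left; apply r_pos; lia|].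
      now apply Rinv_le_contravar. }
  assert (Hexp : INR i / (x + INR i) <= 1 - exp (- / x * INR i)).
  { replace (- / x * INR i) with (- (INR i / x)) by (field; lra).
    replace (INR i / (x + INR i)) with (INR i / x / (1 + INR i / x)) by (field; lra).
    apply one_sub_exp_ge. left; now apply Rdiv_lt_0_compat. }
  replace (B / (A * L) * / (x + INR i))
    with (B / INR i / (A * L) * (INR i / (x + INR i))) by (field; lra).
  apply Rmult_le_compat; [| apply Rle_mult_inv_pos; lra | assumption | assumption].
  apply Rle_mult_inv_pos; [left; now apply Rdiv_lt_0_compat | lra].
Qed.

Lemma tau_cdf_le_exp_ln (m k n : nat) (x : R) : (1 <= m)%nat -> 1 <= x <= INR m ->
  tau_cdf r m k n
    <= exp (INR n / x - INR k * (B / (9 * A * (ln (INR m) + 1))) * (1 + ln (INR m) - ln x)).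
Proof.
  intros Hm Hx. set (L := ln (INR m) + 1).
  assert (HL : 0 < L) by (pose proof (ln_INR_nonneg m Hm); unfold L; lra).
  assert (HK : 0 <= B / (A * L)) by (pose proof A_pos; apply Rle_mult_inv_pos; nra).
  eapply Rle_trans.
  { apply (tau_cdf_le_exp r m r_pos Hm (/ x)). left; apply Rinv_0_lt_compat; lra. }
  apply exp_le_exp.
  assert (Hgap : B / (9 * A * L) * (1 + ln (INR m) - ln x) <= 1 - laplace r m (/ x)).
  { eapply Rle_trans; [| apply one_sub_laplace_ge; [exact Hm | lra]].
    replace (B / (9 * A * L) * (1 + ln (INR m) - ln x))
      with (B / (A * L) * ((1 + ln (INR m) - ln x) / 9)) by (pose proof A_pos; field; lra).
    apply Rmult_le_compat_l; [assumption | now apply sum_inv_shift_ge]. }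
  replace (/ x * INR n) with (INR n / x) by (field; lra).
  pose proof (pos_INR k). nra.
Qed.

Let c := B / (9 * A).

Lemma c_bounds : 0 < c < 1.
Proof.
  pose proof A_pos. destruct (r_bounds 1 (le_n 1)).
  unfold c. split; [apply Rdiv_lt_0_compat; lra|].
  apply (Rmult_lt_reg_r (9 * A)); [lra|]. unfold Rdiv. rewrite Rmult_assoc, Rinv_l; lra.
Qed.

Lemma tau_cdf_le_Rpower (m n k : nat) : (1 <= m)%nat -> (1 <= k <= n)%nat ->
  INR n * (ln (INR m) + 1) / (c * INR k * INR m) < 1 ->
  tau_cdf r m k n
    <= Rpower (INR n * (ln (INR m) + 1) / (c * INR k * INR m)) (c * INR k / (ln (INR m) + 1)).
Proof.
  intros Hm Hkn HQ1.
  set (L := ln (INR m) + 1) in *. set (Q := INR n * L / (c * INR k * INR m)) in *.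
  set (x := INR n * L / (c * INR k)).
  pose proof c_bounds. pose proof A_pos.
  assert (HL : 1 <= L) by (pose proof (ln_INR_nonneg m Hm); unfold L; lra).
  assert (Hm1 : 1 <= INR m) by now apply (le_INR 1).
  assert (Hk1 : 1 <= INR k) by (apply (le_INR 1); lia).
  assert (Hkn' : INR k <= INR n) by (apply le_INR; lia).
  assert (HQx : Q = x / INR m) by (unfold Q, x; field; lra).
  assert (Hx : 1 <= x <= INR m).
  { split.
    - unfold x. apply (Rmult_le_reg_r (c * INR k)); [nra|].
      unfold Rdiv. rewrite Rmult_assoc, Rinv_l; nra.
    - assert (x = Q * INR m) by (rewrite HQx; field; lra). nra. }
  eapply Rle_trans; [apply (tau_cdf_le_exp_ln m k n x Hm Hx)|].
  unfold Rpower. apply exp_le_exp. fold L.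
  assert (HlnQ : ln Q = ln x - ln (INR m)).
  { rewrite HQx. unfold Rdiv. rewrite ln_mult, ln_Rinv; try apply Rinv_0_lt_compat; lra. }
  rewrite HlnQ.
  replace (INR n / x) with (c * INR k / L) by (unfold x; field; lra).
  unfold c. right. field. lra.
Qed.

End Bounds.

Theorem mainTheorem15 (r : nat -> R) (a : R) (ha : 0 < a)
  (hpos : forall n : nat, (1 <= n)%nat -> 0 < r n)
  (hasym : Un_cv (fun n : nat => INR n * r n) a) :
  exists c : R, 0 < c < 1 /\
    forall m n k : nat, (1 <= m)%nat -> (1 <= n)%nat -> (1 <= k)%nat ->
      tau_cdf r m k n <=
      Rpower (Rmin (INR n * (ln (INR m) + 1) / (c * INR k * INR m)) 1)
             (c * INR k / (ln (INR m) + 1)).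
Proof.
  destruct (pos_cv_bounds (fun n => INR n * r n) a ha) as [A [B [HB HAB]]].
  { intros n Hn. apply Rmult_lt_0_compat; [apply lt_0_INR; lia | now apply hpos]. }
  { exact hasym. }
  exists (B / (9 * A)). split; [exact (c_bounds r A B HB HAB)|].
  intros m n k Hm _ Hk.
  destruct (Nat.lt_ge_cases n k) as [Hnk | Hkn].
  { rewrite tau_cdf_lt by assumption. left; apply exp_pos. }
  destruct (Rle_lt_dec 1 (INR n * (ln (INR m) + 1) / (B / (9 * A) * INR k * INR m)))
    as [HQ1 | HQ1].
  - rewrite Rmin_right by assumption. unfold Rpower. rewrite ln_1, Rmult_0_r, exp_0.
    exact (tau_cdf_le1 r m hpos Hm k n).
  - rewrite Rmin_left by lra.
    apply (tau_cdf_le_Rpower r A B HB HAB m n k Hm); [lia | exact HQ1].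
Qed.
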